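(* Let $G$ be a graph (simple, connected, locally finite) all of whose edges have length $k$, let $\mathcal{L}(G)$ be its line graph and $h:\mathcal{L}(G)\to G$ the map defined below. Let $\gamma^*$ be a geodesic of $\mathcal{L}(G)$ joining points $x,y$ that are each either a vertex of $\mathcal{L}(G)$ or a midpoint of an edge of $\mathcal{L}(G)$. Then $h(\gamma^* )$ is the union of three geodesics $\gamma_1^*,\gamma_2^*,\gamma_3^*$ of $G$ with $h(x)\in\gamma_1^*$, $h(y)\in\gamma_3^*$ and $0\le L(\gamma_1^* ),L(\gamma_3^* )\le k/2$.
   Context: Graphs are regarded as geodesic metric spaces: each edge is identified with a real interval of its length and distances are shortest-path distances. The line graph $\mathcal{L}(G)$ has a vertex $V_e$ for each edge $e$ of $G$, and an edge $[V_{e_i},V_{e_j}]$ whenever $e_i\neq e_j$ and $e_i\cap e_j\neq\varnothing$, of length $(L(e_i)+L(e_j))/2$ (here equal to $k$). $Pm(e)$ denotes the midpoint of $e$. The map $h$ is defined by $h(V_e)=Pm(e)$, $h$(midpoint of $[V_{e_i},V_{e_j}]$)$=e_i\cap e_j$ (a vertex of $G$), and for $x_0$ in the interior of the segment from $V_e$ to the midpoint of $[V_e,V_{e_0}]$, $h(x_0)$ is the point of the half-edge of $e$ from $Pm(e)$ to $e\cap e_0$ at distance $d(x_0,V_e)$ from $Pm(e)$. *)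

From Stdlib Require Import Reals Lra List ClassicalEpsilon ClassicalDescription.
Open Scope R_scope.

Set Implicit Arguments.

Inductive walk (V : Type) (adj : V -> V -> Prop) : nat -> V -> V -> Prop :=
| walk0 u : walk adj 0 u u
| walkS n u w v : adj u w -> walk adj n w v -> walk adj (S n) u v.

Definition simple_graph (V : Type) (adj : V -> V -> Prop) : Prop :=
  (forall u v, adj u v -> adj v u) /\ (forall u, ~ adj u u).

Definition connected (V : Type) (adj : V -> V -> Prop) : Prop :=
  forall u v, exists n, walk adj n u v.

Definition locally_finite (V : Type) (adj : V -> V -> Prop) : Prop :=
  forall u, exists l : list V, forall v, adj u v -> In v l.

(** combinatorial distance: the least length of a walk (meaningful for
    connected graphs) *)
Definition gdist (V : Type) (adj : V -> V -> Prop) (u v : V) : nat :=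
  epsilon (inhabits 0%nat)
    (fun n => walk adj n u v /\ forall m, walk adj m u v -> (n <= m)%nat).

(** * Metric graph with all edges of length [len]
    A point is represented by [MPoint a b t] with [adj a b], [0 <= t <= len]:
    the point of the edge [a b] at distance [t] from [a].  Different
    representations of the same point (e.g. [MPoint a b t] and
    [MPoint b a (len - t)], or a vertex seen on different incident edges)
    are at distance 0; points are compared up to distance 0. *)

Record mpoint (V : Type) := MPoint { mp_a : V; mp_b : V; mp_t : R }.
Arguments MPoint {V}.

Definition is_mpoint (V : Type) (adj : V -> V -> Prop) (len : R) (p : mpoint V)
  : Prop := adj (mp_a p) (mp_b p) /\ 0 <= mp_t p <= len.

Definition route (V : Type) (adj : V -> V -> Prop) (len : R)
  (dp : R) (x y : V) (dq : R) : R :=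
  dp + len * INR (gdist adj x y) + dq.

Definition mdist (V : Type) (adj : V -> V -> Prop) (len : R) (p q : mpoint V) : R :=
  let a := mp_a p in let b := mp_b p in let t := mp_t p in
  let c := mp_a q in let e := mp_b q in let s := mp_t q in
  if excluded_middle_informative (a = c /\ b = e) then Rabs (t - s)
  else if excluded_middle_informative (a = e /\ b = c) then Rabs (t - (len - s))
  else Rmin (Rmin (route adj len t a c s) (route adj len t a e (len - s)))
            (Rmin (route adj len (len - t) b c s)
                  (route adj len (len - t) b e (len - s))).

Definition geodesic (P : Type) (valid : P -> Prop) (d : P -> P -> R)
  (g : R -> P) (L : R) : Prop :=
  0 <= L /\ (forall s, 0 <= s <= L -> valid (g s)) /\
  forall s t, 0 <= s <= L -> 0 <= t <= L -> d (g s) (g t) = Rabs (s - t).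

Definition on_path (P : Type) (d : P -> P -> R) (g : R -> P) (L : R) (q : P)
  : Prop := exists s, 0 <= s <= L /\ d (g s) q = 0.

Definition vpair (V : Type) (a b : V) : V -> Prop := fun z => z = a \/ z = b.

Definition ledge (V : Type) (adj : V -> V -> Prop) : Type :=
  { s : V -> Prop | exists a b, adj a b /\ s = vpair a b }.

Definition ladj (V : Type) (adj : V -> V -> Prop) (e f : ledge adj) : Prop :=
  e <> f /\ exists x, proj1_sig e x /\ proj1_sig f x.

Definition llen (k : R) : R := (k + k) / 2.

Definition ledge_inh (V : Type) (adj : V -> V -> Prop) (e : ledge adj)
  : inhabited (V * V * V) :=
  match proj2_sig e with ex_intro _ a _ => inhabits (a, a, a) end.

(** for adjacent e, f: (x, ye, yf) with e = {x,ye}, f = {x,yf}, so x = e ∩ f *)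
Definition common_data (V : Type) (adj : V -> V -> Prop) (e f : ledge adj)
  : V * V * V :=
  epsilon (ledge_inh e)
    (fun '(x, ye, yf) => proj1_sig e = vpair x ye /\ proj1_sig f = vpair x yf
                         /\ adj x ye /\ adj x yf).

(** A point of L(G) is [MPoint e f t] on the edge
    [V_e V_f] at distance t from V_e.  For t <= k/2 (segment from V_e to the
    midpoint) h gives the point of the half-edge of e from Pm(e) to e ∩ f at
    distance t from Pm(e); for t >= k/2 symmetrically on f (distance
    llen k - t from Pm(f)).  In particular h(V_e) = Pm(e) and h(midpoint) =
    e ∩ f. *)
Definition hmap (V : Type) (adj : V -> V -> Prop) (k : R)
  (p : mpoint (ledge adj)) : mpoint V :=
  let '(x, ye, yf) := common_data (mp_a p) (mp_b p) in
  let t := mp_t p in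
  if Rle_dec t (llen k / 2) then MPoint x ye (k / 2 - t)
  else MPoint x yf (k / 2 - (llen k - t)).

Definition vertex_or_mid (V : Type) (adj : V -> V -> Prop) (k : R)
  (p : mpoint (ledge adj)) : Prop :=
  mp_t p = 0 \/ mp_t p = llen k / 2 \/ mp_t p = llen k.

(* Write g for the geodesic of L(G).  The map h is 1-Lipschitz.  Near a vertex or an
   edge midpoint x of L(G) it does not shrink distances up to k/2, so with
   m = min(L, k/2) the restrictions of h o g to [0, m] and [L - m, L] are 1-Lipschitz
   maps of intervals whose endpoints keep their full distance, i.e. geodesics.  When
   L >= k, the points g(k/2) and g(L - k/2) are at distance k/2 from x and y, so each
   is either a vertex of L(G) or is sent by h to an endpoint of the edge x (resp. y)
   of G; the comparison d_L(e, f) <= k + d_G(a, c) for a in e, c in f then shows that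
   h does not shrink their distance L - k, and h o g is a geodesic on [k/2, L - k/2]
   too. *)

From Stdlib Require Import Reals Lra Lia Wf_nat Classical ClassicalEpsilon
  ClassicalDescription FunctionalExtensionality PropExtensionality.
Open Scope R_scope.

Ltac min_abs_lra := unfold Rmin, Rmax, Rabs in *;
  repeat match goal with
  | |- context [Rle_dec ?a ?b] => destruct (Rle_dec a b)
  | H : context [Rle_dec ?a ?b] |- _ => destruct (Rle_dec a b)
  | |- context [Rcase_abs ?a] => destruct (Rcase_abs a)
  | H : context [Rcase_abs ?a] |- _ => destruct (Rcase_abs a)
  end; lra.

Lemma Rmin_eq_cases u v w : Rmin u v = w -> u = w \/ v = w.
Proof. unfold Rmin; destruct Rle_dec; auto. Qed.

Record metric_graph {V : Type} (adj : V -> V -> Prop) (len : R) : Prop := {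
  mg_sym : forall u v, adj u v -> adj v u;
  mg_irrefl : forall u, ~ adj u u;
  mg_connected : connected adj;
  mg_len_pos : 0 < len }.
Arguments mg_sym {V adj len}.
Arguments mg_irrefl {V adj len}.
Arguments mg_connected {V adj len}.
Arguments mg_len_pos {V adj len}.

Definition vdist {V : Type} (adj : V -> V -> Prop) (len : R) (u v : V) : R :=
  len * INR (gdist adj u v).

Definition lies_at {V : Type} (len : R) (p : mpoint V) (v : V) (tau : R) : Prop :=
  (mp_a p = v /\ mp_t p = tau) \/ (mp_b p = v /\ mp_t p = len - tau).

Definition vertex_dist {V : Type} (adj : V -> V -> Prop) (len : R)
  (p : mpoint V) (v : V) : R :=
  Rmin (mp_t p + vdist adj len (mp_a p) v) (len - mp_t p + vdist adj len (mp_b p) v).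

Definition via_ends {V : Type} (adj : V -> V -> Prop) (len : R) (p r : mpoint V) : R :=
  Rmin (vertex_dist adj len p (mp_a r) + mp_t r)
       (vertex_dist adj len p (mp_b r) + (len - mp_t r)).

Section MetricGraph.
Context {V : Type} {adj : V -> V -> Prop} {len : R} (HG : metric_graph adj len).

Local Notation D := (vdist adj len).
Local Notation d := (mdist adj len).
Local Notation ok := (is_mpoint adj len).

Lemma walk_cat n u w : walk adj n u w -> forall m v, walk adj m w v -> walk adj (n + m) u v.
Proof. induction 1; intros; simpl; auto. econstructor; eauto. Qed.

Lemma walk_rev n u v : walk adj n u v -> walk adj n v u.
Proof.
  induction 1; [constructor|].
  replace (S n) with (n + 1)%nat by lia. eapply walk_cat; eauto.
  econstructor; [apply (mg_sym HG); eauto | constructor].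
Qed.

Lemma gdist_spec u v :
  walk adj (gdist adj u v) u v /\ forall m, walk adj m u v -> (gdist adj u v <= m)%nat.
Proof.
  unfold gdist. apply epsilon_spec.
  destruct (dec_inh_nat_subset_has_unique_least_element (fun n => walk adj n u v))
    as [n [[Hn Hmin] _]].
  - intro n; apply classic.
  - exact (mg_connected HG u v).
  - exists n; auto.
Qed.

Lemma gdist_min u v m : walk adj m u v -> (gdist adj u v <= m)%nat.
Proof. apply gdist_spec. Qed.

Lemma gdist_xx u : gdist adj u u = 0%nat.
Proof. pose proof (gdist_min _ _ _ (walk0 adj u)). lia. Qed.

Lemma gdist_eq0 u v : gdist adj u v = 0%nat -> u = v.
Proof. intro H. pose proof (proj1 (gdist_spec u v)) as W. rewrite H in W. now inversion W. Qed.

Lemma gdist_triangle u v w : (gdist adj u w <= gdist adj u v + gdist adj v w)%nat.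
Proof. apply gdist_min. eapply walk_cat; apply gdist_spec. Qed.

Lemma gdist_sym u v : gdist adj u v = gdist adj v u.
Proof. apply Nat.le_antisymm; apply gdist_min, walk_rev, gdist_spec. Qed.

Lemma vdist_ge0 u v : 0 <= D u v.
Proof. apply Rmult_le_pos; [pose proof (mg_len_pos HG); lra | apply pos_INR]. Qed.

Lemma vdist_xx u : D u u = 0.
Proof. unfold vdist. rewrite gdist_xx. simpl. ring. Qed.

Lemma vdist_sym u v : D u v = D v u.
Proof. unfold vdist. now rewrite gdist_sym. Qed.

Lemma vdist_walk u v m : walk adj m u v -> D u v <= len * INR m.
Proof.
  intro H. apply Rmult_le_compat_l; [pose proof (mg_len_pos HG); lra|].
  apply le_INR, (gdist_min _ _ _ H).
Qed.

Lemma vdist_triangle u v w : D u w <= D u v + D v w.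
Proof.
  unfold vdist. rewrite <- Rmult_plus_distr_l, <- plus_INR.
  apply Rmult_le_compat_l; [pose proof (mg_len_pos HG); lra|].
  apply le_INR, gdist_triangle.
Qed.

Lemma vdist_adj u v : adj u v -> D u v <= len.
Proof.
  intro H. assert (W : walk adj 1 u v) by (econstructor; [exact H | constructor]).
  pose proof (vdist_walk _ _ _ W). simpl in *. lra.
Qed.

Lemma vdist_neq u v : u <> v -> len <= D u v.
Proof.
  intro H. unfold vdist. rewrite <- (Rmult_1_r len) at 1.
  apply Rmult_le_compat_l; [pose proof (mg_len_pos HG); lra|].
  change 1 with (INR 1). apply le_INR.
  destruct (gdist adj u v) eqn:E; [apply gdist_eq0 in E; congruence | lia].
Qed.

Lemma vdist_lt_len u v : D u v < len -> u = v.
Proof. intro H. apply NNPP. intro N. apply vdist_neq in N. lra. Qed.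

Lemma adj_neq a b : adj a b -> a <> b.
Proof. intros H ->. exact (mg_irrefl HG _ H). Qed.

Lemma mdist_same a b t s : d (MPoint a b t) (MPoint a b s) = Rabs (t - s).
Proof.
  unfold mdist; simpl. destruct (excluded_middle_informative (a = a /\ b = b)); tauto.
Qed.

Lemma mdist_swap a b t s :
  a <> b -> d (MPoint a b t) (MPoint b a s) = Rabs (t - (len - s)).
Proof.
  intro H. unfold mdist; simpl.
  destruct (excluded_middle_informative (a = b /\ b = a)) as [[]|]; [congruence|].
  destruct (excluded_middle_informative (a = a /\ b = b)); tauto.
Qed.

Lemma mdist_other a b t c e s : ~ (a = c /\ b = e) -> ~ (a = e /\ b = c) ->
  d (MPoint a b t) (MPoint c e s) =
  Rmin (Rmin (t + D a c + s) (t + D a e + (len - s)))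
       (Rmin (len - t + D b c + s) (len - t + D b e + (len - s))).
Proof.
  intros H1 H2. unfold mdist, route, vdist; simpl.
  destruct (excluded_middle_informative (a = c /\ b = e)); [tauto|].
  destruct (excluded_middle_informative (a = e /\ b = c)); [tauto | reflexivity].
Qed.

Lemma mdist_xx p : d p p = 0.
Proof. destruct p. rewrite mdist_same, Rminus_diag. apply Rabs_R0. Qed.

Lemma mdist_le_lies_at {p q a c tau sig} : ok p -> ok q ->
  lies_at len p a tau -> lies_at len q c sig -> d p q <= tau + D a c + sig.
Proof.
  destruct p as [pa pb t], q as [qa qb s]; unfold is_mpoint, lies_at; simpl.
  intros [Hp Ht] [Hq Hs] HA HC.
  pose proof (adj_neq _ _ Hp). pose proof (adj_neq _ _ Hq).
  destruct (classic (pa = qa /\ pb = qb)) as [[-> ->]|N1];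
    [rewrite mdist_same | destruct (classic (pa = qb /\ pb = qa)) as [[-> ->]|N2];
      [rewrite mdist_swap by auto | rewrite mdist_other by auto]];
  destruct HA as [[-> ->]|[-> ->]]; destruct HC as [[-> ->]|[-> ->]];
  repeat match goal with |- context [D ?x ?y] =>
    let E := fresh in destruct (classic (x = y)) as [E|E];
    [subst; rewrite ?vdist_xx
    | pose proof (vdist_neq _ _ E); pose proof (vdist_ge0 x y);
      generalize dependent (D x y); intros] end;
  try congruence; min_abs_lra.
Qed.

Lemma mdist_common_start {x y y'} u v : adj x y -> adj x y' ->
  0 <= u <= len -> 0 <= v <= len -> d (MPoint x y u) (MPoint x y' v) <= u + v.
Proof.
  intros Ay Ay' Hu Hv.
  pose proof (mdist_le_lies_at (p := MPoint x y u) (q := MPoint x y' v)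
                (a := x) (c := x) (tau := u) (sig := v)
                ltac:(now split) ltac:(now split) ltac:(now left) ltac:(now left)) as T.
  rewrite vdist_xx in T. lra.
Qed.

Lemma mdist_sym {p q} : ok p -> ok q -> d p q = d q p.
Proof.
  destruct p as [pa pb t], q as [qa qb s]; unfold is_mpoint; simpl.
  intros [Hp Ht] [Hq Hs].
  pose proof (adj_neq _ _ Hp). pose proof (adj_neq _ _ Hq).
  destruct (classic (pa = qa /\ pb = qb)) as [[-> ->]|N1].
  { rewrite !mdist_same. min_abs_lra. }
  destruct (classic (pa = qb /\ pb = qa)) as [[-> ->]|N2].
  { rewrite !mdist_swap by auto. min_abs_lra. }
  rewrite !mdist_other by (intros [? ?]; subst; tauto).
  rewrite (vdist_sym qa pa), (vdist_sym qa pb), (vdist_sym qb pa), (vdist_sym qb pb).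
  min_abs_lra.
Qed.

Lemma mdist_ge0 {p q} : ok p -> ok q -> 0 <= d p q.
Proof.
  destruct p as [pa pb t], q as [qa qb s]; unfold is_mpoint; simpl.
  intros [Hp Ht] [Hq Hs].
  destruct (classic (pa = qa /\ pb = qb)) as [[-> ->]|N1].
  { rewrite mdist_same. apply Rabs_pos. }
  destruct (classic (pa = qb /\ pb = qa)) as [[-> ->]|N2].
  { rewrite mdist_swap by (apply adj_neq; auto). apply Rabs_pos. }
  rewrite mdist_other by (intros [? ?]; subst; tauto).
  pose proof (vdist_ge0 pa qa); pose proof (vdist_ge0 pa qb);
  pose proof (vdist_ge0 pb qa); pose proof (vdist_ge0 pb qb).
  min_abs_lra.
Qed.

Lemma vertex_dist_lipschitz {p q} v : ok p -> ok q ->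
  vertex_dist adj len q v <= d p q + vertex_dist adj len p v.
Proof.
  destruct p as [pa pb t], q as [qa qb s]; unfold is_mpoint, vertex_dist; simpl.
  intros [Hp Ht] [Hq Hs].
  pose proof (adj_neq _ _ Hp). pose proof (adj_neq _ _ Hq).
  destruct (classic (pa = qa /\ pb = qb)) as [[-> ->]|N1].
  { rewrite mdist_same. min_abs_lra. }
  destruct (classic (pa = qb /\ pb = qa)) as [[-> ->]|N2].
  { rewrite mdist_swap by auto. min_abs_lra. }
  rewrite mdist_other by (intros [? ?]; subst; tauto).
  pose proof (vdist_triangle qa pa v); pose proof (vdist_triangle qa pb v);
  pose proof (vdist_triangle qb pa v); pose proof (vdist_triangle qb pb v).
  pose proof (vdist_adj _ _ Hp); pose proof (vdist_adj _ _ (mg_sym HG _ _ Hp)).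
  rewrite (vdist_sym qa pa), (vdist_sym qa pb), (vdist_sym qb pa), (vdist_sym qb pb) in *.
  pose proof (vdist_triangle pa pb v); pose proof (vdist_triangle pb pa v).
  pose proof (vdist_ge0 pa qa); pose proof (vdist_ge0 pa qb);
  pose proof (vdist_ge0 pb qa); pose proof (vdist_ge0 pb qb).
  min_abs_lra.
Qed.

Lemma mdist_le_via_ends {p r} : ok p -> ok r -> d p r <= via_ends adj len p r.
Proof.
  intros Hp Hr. destruct p as [pa pb t], r as [ra rb s]. unfold via_ends, vertex_dist; simpl.
  assert (A1 : lies_at len (MPoint pa pb t) pa t) by (left; simpl; auto).
  assert (A2 : lies_at len (MPoint pa pb t) pb (len - t)) by (right; simpl; split; auto; ring).
  assert (C1 : lies_at len (MPoint ra rb s) ra s) by (left; simpl; auto).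
  assert (C2 : lies_at len (MPoint ra rb s) rb (len - s)) by (right; simpl; split; auto; ring).
  pose proof (mdist_le_lies_at Hp Hr A1 C1).
  pose proof (mdist_le_lies_at Hp Hr A1 C2).
  pose proof (mdist_le_lies_at Hp Hr A2 C1).
  pose proof (mdist_le_lies_at Hp Hr A2 C2).
  min_abs_lra.
Qed.

Lemma mdist_other_via_ends p r :
  ~ (mp_a p = mp_a r /\ mp_b p = mp_b r) -> ~ (mp_a p = mp_b r /\ mp_b p = mp_a r) ->
  d p r = via_ends adj len p r.
Proof.
  destruct p as [pa pb t], r as [ra rb s]; simpl; intros.
  rewrite mdist_other by auto. unfold via_ends, vertex_dist; simpl. min_abs_lra.
Qed.

(* Off [r]'s edge, a shortest route to [r] enters that edge through one of its
   endpoints, and [vertex_dist] is 1-Lipschitz. *)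
Lemma mdist_triangle_off_edge {p q r} : ok p -> ok q -> ok r ->
  ~ (mp_a q = mp_a r /\ mp_b q = mp_b r) -> ~ (mp_a q = mp_b r /\ mp_b q = mp_a r) ->
  d p r <= d p q + d q r.
Proof.
  intros Hp Hq Hr N1 N2.
  pose proof (mdist_le_via_ends Hp Hr).
  rewrite (mdist_other_via_ends q r N1 N2).
  pose proof (vertex_dist_lipschitz (mp_a r) Hq Hp).
  pose proof (vertex_dist_lipschitz (mp_b r) Hq Hp).
  rewrite (mdist_sym Hq Hp) in *.
  unfold via_ends in *. min_abs_lra.
Qed.

Lemma mdist_triangle {p q r} : ok p -> ok q -> ok r -> d p r <= d p q + d q r.
Proof.
  intros Hp Hq Hr.
  destruct (classic (~ (mp_a q = mp_a r /\ mp_b q = mp_b r) /\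
                     ~ (mp_a q = mp_b r /\ mp_b q = mp_a r))) as [[N1 N2]|N].
  { apply mdist_triangle_off_edge; auto. }
  destruct (classic (~ (mp_a q = mp_a p /\ mp_b q = mp_b p) /\
                     ~ (mp_a q = mp_b p /\ mp_b q = mp_a p))) as [[N1 N2]|N'].
  { rewrite (mdist_sym Hp Hr), (mdist_sym Hp Hq), (mdist_sym Hq Hr).
    rewrite Rplus_comm. apply mdist_triangle_off_edge; auto. }
  (* otherwise all three points lie on one edge *)
  destruct p as [pa pb t], q as [qa qb u], r as [ra rb s]; simpl in *.
  destruct Hp as [Hp Ht], Hq as [Hq Hu], Hr as [Hr Hs]; simpl in *.
  pose proof (adj_neq _ _ Hp). pose proof (adj_neq _ _ Hq). pose proof (adj_neq _ _ Hr).
  apply not_and_or in N; apply not_and_or in N'.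
  destruct N as [N|N]; apply NNPP in N; destruct N' as [N'|N']; apply NNPP in N';
  destruct N as [? ?], N' as [? ?]; subst;
  repeat first [rewrite mdist_same | rewrite mdist_swap by auto]; min_abs_lra.
Qed.

Lemma mdist_zero_l {p p' q} : ok p -> ok p' -> ok q -> d p p' = 0 -> d p q = d p' q.
Proof.
  intros Hp Hp' Hq H0.
  pose proof (mdist_triangle Hp Hp' Hq). pose proof (mdist_triangle Hp' Hp Hq).
  rewrite (mdist_sym Hp' Hp) in *. lra.
Qed.

Lemma mdist_zero_congr {a b c e} : ok a -> ok b -> ok c -> ok e ->
  d a c = 0 -> d b e = 0 -> d c e <= d a b.
Proof.
  intros Va Vb Vc Ve H1 H2.
  pose proof (mdist_triangle Vc Va Ve). pose proof (mdist_triangle Va Vb Ve).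
  rewrite (mdist_sym Vc Va) in *. lra.
Qed.

Lemma is_mpoint_start a b : adj a b -> ok (MPoint a b 0).
Proof. pose proof (mg_len_pos HG). split; simpl; auto; lra. Qed.

Lemma is_mpoint_mid a b : adj a b -> ok (MPoint a b (len/2)).
Proof. pose proof (mg_len_pos HG). split; simpl; auto; lra. Qed.

Lemma near_vertex_start e f q : ok (MPoint e f 0) -> ok q ->
  d (MPoint e f 0) q < len -> lies_at len q e (d (MPoint e f 0) q).
Proof.
  intros Hx Hq Hlt. destruct q as [qa qb s]. unfold lies_at; simpl.
  destruct Hx as [Hx Ht], Hq as [Hq Hs]; simpl in *.
  pose proof (adj_neq _ _ Hx). pose proof (adj_neq _ _ Hq).
  destruct (classic (e = qa /\ f = qb)) as [[-> ->]|N1].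
  { rewrite mdist_same in *. left; split; auto. min_abs_lra. }
  destruct (classic (e = qb /\ f = qa)) as [[-> ->]|N2].
  { rewrite mdist_swap in * by auto. right; split; auto. min_abs_lra. }
  rewrite mdist_other in * by auto.
  pose proof (vdist_ge0 e qa); pose proof (vdist_ge0 e qb);
  pose proof (vdist_ge0 f qa); pose proof (vdist_ge0 f qb).
  destruct (classic (e = qa)) as [->|E].
  { rewrite vdist_xx in *. pose proof (vdist_neq _ _ (adj_neq _ _ Hq)).
    left; split; auto. min_abs_lra. }
  destruct (classic (e = qb)) as [->|E'].
  { rewrite vdist_xx in *. pose proof (vdist_neq _ _ (adj_neq _ _ (mg_sym HG _ _ Hq))).
    right; split; auto. min_abs_lra. }
  pose proof (vdist_neq _ _ E). pose proof (vdist_neq _ _ E'). exfalso. min_abs_lra.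
Qed.

Lemma near_vertex x e q : ok x -> ok q -> lies_at len x e 0 -> d x q < len ->
  lies_at len q e (d x q).
Proof.
  intros Hx Hq HA Hlt. destruct x as [xa xb t].
  destruct HA as [[E1 E2]|[E1 E2]]; simpl in *; subst.
  - apply near_vertex_start; auto.
  - assert (Hx' : ok (MPoint e xa 0)).
    { destruct Hx as [Ha Ht]; split; simpl in *; [apply (mg_sym HG); auto | lra]. }
    assert (Z : d (MPoint xa e (len - 0)) (MPoint e xa 0) = 0).
    { destruct Hx. rewrite mdist_swap by (apply adj_neq; auto).
      rewrite <- Rabs_R0. f_equal. ring. }
    rewrite (mdist_zero_l Hx Hx' Hq Z) in *. apply near_vertex_start; auto.
Qed.

Lemma near_midpoint a b q : ok (MPoint a b (len/2)) -> ok q ->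
  d (MPoint a b (len/2)) q <= len/2 ->
  (mp_a q = a /\ mp_b q = b) \/ (mp_a q = b /\ mp_b q = a) \/
  (d (MPoint a b (len/2)) q = len/2 /\ (lies_at len q a 0 \/ lies_at len q b 0)).
Proof.
  intros Hx Hq Hle. destruct q as [qa qb s]. unfold lies_at; simpl.
  destruct Hx as [Hx Ht], Hq as [Hq Hs]; simpl in *.
  destruct (classic (a = qa /\ b = qb)) as [[-> ->]|N1]; [auto|].
  destruct (classic (a = qb /\ b = qa)) as [[-> ->]|N2]; [auto|].
  right; right. rewrite mdist_other in * by auto. pose proof (mg_len_pos HG).
  pose proof (vdist_ge0 a qa); pose proof (vdist_ge0 a qb);
  pose proof (vdist_ge0 b qa); pose proof (vdist_ge0 b qb).
  assert (Ev : Rmin (Rmin (len / 2 + D a qa + s) (len / 2 + D a qb + (len - s)))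
    (Rmin (len - len / 2 + D b qa + s) (len - len / 2 + D b qb + (len - s))) = len/2)
    by min_abs_lra.
  split; auto.
  destruct (Rmin_eq_cases _ _ _ Ev) as [F|F]; destruct (Rmin_eq_cases _ _ _ F) as [G|G];
    [ assert (E : D a qa < len) by lra | assert (E : D a qb < len) by lra
    | assert (E : D b qa < len) by lra | assert (E : D b qb < len) by lra ];
    apply vdist_lt_len in E; subst;
    [left; left | left; right | right; left | right; right]; split; auto; lra.
Qed.

Lemma vdist_le_mdist_vertices {z z' w w'} : adj z z' -> adj w w' ->
  D z w <= d (MPoint z z' 0) (MPoint w w' 0).
Proof.
  intros Az Aw.
  pose proof (vertex_dist_lipschitz z (is_mpoint_start _ _ Az) (is_mpoint_start _ _ Aw)) as H.
  unfold vertex_dist in H; simpl in H. rewrite vdist_xx in H.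
  pose proof (vdist_triangle w w' z). pose proof (vdist_adj _ _ Aw).
  pose proof (vdist_ge0 z' z). pose proof (vdist_ge0 w' z).
  rewrite (vdist_sym w z) in *. min_abs_lra.
Qed.

Lemma mdist_vertex_midpoint_ge {z z' w w'} : adj z z' -> adj w w' ->
  len/2 + Rmin (D z w) (D z w') <= d (MPoint z z' 0) (MPoint w w' (len/2)).
Proof.
  intros Az Aw.
  pose proof (vertex_dist_lipschitz z (is_mpoint_start _ _ Az) (is_mpoint_mid _ _ Aw)) as H.
  unfold vertex_dist in H; simpl in H. rewrite vdist_xx in H.
  pose proof (vdist_ge0 z' z). rewrite (vdist_sym w z), (vdist_sym w' z) in *. min_abs_lra.
Qed.

Lemma mdist_vertex_ge {x w z} r : adj x w -> adj x z -> 0 <= r <= len/2 ->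
  r <= d (MPoint x w 0) (MPoint x z r).
Proof.
  intros Aw Az Hr.
  assert (Vr : ok (MPoint x z r)) by (split; simpl; auto; lra).
  pose proof (vertex_dist_lipschitz x (is_mpoint_start _ _ Aw) Vr) as H.
  unfold vertex_dist in H; simpl in H. rewrite vdist_xx in H.
  pose proof (vdist_ge0 w x). pose proof (vdist_ge0 z x). min_abs_lra.
Qed.

Lemma geodesic_start_dist {g L x} s : geodesic ok d g L -> ok x -> d (g 0) x = 0 ->
  0 <= s <= L -> d x (g s) = s.
Proof.
  intros [HL [Hv Hd]] Hx H0 Hs.
  rewrite <- (mdist_zero_l (Hv 0 ltac:(lra)) Hx (Hv s Hs) H0), Hd by lra.
  unfold Rabs; destruct Rcase_abs; lra.
Qed.

Lemma geodesic_end_dist {g L y} s : geodesic ok d g L -> ok y -> d (g L) y = 0 ->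
  0 <= s <= L -> d y (g s) = L - s.
Proof.
  intros [HL [Hv Hd]] Hy H0 Hs.
  rewrite <- (mdist_zero_l (Hv L ltac:(lra)) Hy (Hv s Hs) H0), Hd by lra.
  unfold Rabs; destruct Rcase_abs; lra.
Qed.

Lemma geodesic_lipschitz_image {P : Type} (okP : P -> Prop) (dP : P -> P -> R)
  (f : P -> mpoint V) (g : R -> P) L a b :
  (forall p, okP p -> ok (f p)) ->
  (forall p q, okP p -> okP q -> d (f p) (f q) <= dP p q) ->
  geodesic okP dP g L -> 0 <= a <= b -> b <= L ->
  b - a <= d (f (g a)) (f (g b)) ->
  geodesic ok d (fun s => f (g (a + s))) (b - a).
Proof.
  intros Hf Hlip [HL [Hv Hd]] Hab HbL Hend.
  assert (Hok : forall s, 0 <= s <= L -> ok (f (g s))) by (intros; apply Hf, Hv; lra).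
  assert (Hup : forall s u, 0 <= s <= b - a -> 0 <= u <= b - a ->
                  d (f (g (a + s))) (f (g (a + u))) <= Rabs (s - u)).
  { intros s u Hs Hu. replace (s - u) with (a + s - (a + u)) by ring.
    rewrite <- Hd by lra. apply Hlip; apply Hv; lra. }
  assert (Hlow : forall s u, 0 <= s <= u -> u <= b - a ->
                   u - s <= d (f (g (a + s))) (f (g (a + u)))).
  { intros s u H1 H2.
    pose proof (mdist_triangle (Hok a ltac:(lra)) (Hok (a + s) ltac:(lra))
                  (Hok b ltac:(lra))) as T1.
    pose proof (mdist_triangle (Hok (a + s) ltac:(lra)) (Hok (a + u) ltac:(lra))
                  (Hok b ltac:(lra))) as T2.
    pose proof (Hup 0 s ltac:(lra) ltac:(lra)) as T3.
    pose proof (Hup u (b - a) ltac:(lra) ltac:(lra)) as T4.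
    rewrite Rplus_0_r in T3. replace (a + (b - a)) with b in T4 by ring.
    min_abs_lra. }
  split; [lra | split].
  - intros s Hs. apply Hok. lra.
  - intros s u Hs Hu. apply Rle_antisym; [now apply Hup|].
    destruct (Rle_dec s u).
    + pose proof (Hlow s u ltac:(lra) ltac:(lra)). min_abs_lra.
    + pose proof (Hlow u s ltac:(lra) ltac:(lra)).
      rewrite (mdist_sym (Hok (a + u) ltac:(lra)) (Hok (a + s) ltac:(lra))) in *.
      min_abs_lra.
Qed.

End MetricGraph.

Lemma vpair_eq {V : Type} {a b c e : V} :
  vpair a b = vpair c e -> (a = c /\ b = e) \/ (a = e /\ b = c).
Proof.
  intro H. unfold vpair in H.
  assert (Ha : a = c \/ a = e) by (rewrite <- (f_equal (fun P => P a) H); auto).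
  assert (Hb : b = c \/ b = e) by (rewrite <- (f_equal (fun P => P b) H); auto).
  assert (Hc : c = a \/ c = b) by (rewrite (f_equal (fun P => P c) H); auto).
  assert (He : e = a \/ e = b) by (rewrite (f_equal (fun P => P e) H); auto).
  destruct Ha, Hb, Hc, He; subst; auto.
Qed.

Lemma vpair_comm {V : Type} (a b : V) : vpair a b = vpair b a.
Proof.
  apply functional_extensionality; intro z. apply propositional_extensionality.
  unfold vpair. tauto.
Qed.

Definition is_vertex {W : Type} (len : R) (p : mpoint W) : Prop :=
  exists a, lies_at len p a 0.

Lemma llen_k k : llen k = k.
Proof. unfold llen; field. Qed.

Section LineGraph.
Context {V : Type} {adj : V -> V -> Prop} {k : R} (HG : metric_graph adj k).

Local Notation LV := (ledge adj).
Local Notation LA := (ladj (adj:=adj)).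
Local Notation dG := (mdist adj k).
Local Notation dL := (mdist LA k).
Local Notation okG := (is_mpoint adj k).
Local Notation okL := (is_mpoint LA k).
Local Notation DG := (vdist adj k).
Local Notation DL := (vdist LA k).
Local Notation h := (hmap k).

Lemma ledge_eq (e f : LV) : proj1_sig e = proj1_sig f -> e = f.
Proof.
  destruct e as [se pe], f as [sf pf]; simpl; intros ->. f_equal. apply proof_irrelevance.
Qed.

Definition mkedge {a b : V} (H : adj a b) : LV :=
  exist _ (vpair a b) (ex_intro _ a (ex_intro _ b (conj H eq_refl))).

Lemma ledge_dest (e : LV) : exists a b, adj a b /\ proj1_sig e = vpair a b.
Proof. destruct e as [s [a [b [H E]]]]; simpl; eauto. Qed.

Lemma ledge_other {e : LV} {z} : proj1_sig e z -> exists o, proj1_sig e = vpair z o /\ adj z o.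
Proof.
  intro H. destruct (ledge_dest e) as [a [b [Hab Ea]]]. rewrite Ea in H.
  destruct H as [->| ->].
  - exists b; auto.
  - exists a; split; [rewrite Ea; apply vpair_comm | apply (mg_sym HG); auto].
Qed.

Lemma adj_of_ledge (w : LV) z a : proj1_sig w z -> proj1_sig w a -> z <> a -> adj z a.
Proof.
  destruct (ledge_dest w) as [p [q [Hpq ->]]]. unfold vpair.
  intros [->| ->] [->| ->] N; try congruence; auto. apply (mg_sym HG); auto.
Qed.

Lemma line_walk_of_walk {m a c} : walk adj m a c -> forall e g : LV,
  proj1_sig e a -> proj1_sig g c -> exists n, (n <= S m)%nat /\ walk LA n e g.
Proof.
  induction 1 as [u | m u w v Huw Hw IH]; intros e g Ha Hc.
  - destruct (classic (e = g)) as [<-|E].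
    + exists 0%nat; split; [lia | constructor].
    + exists 1%nat; split; [lia|].
      econstructor; [split; [exact E | exists u; auto] | constructor].
  - destruct (IH (mkedge Huw) g) as [n' [Hn' Hw']]; auto.
    { simpl; unfold vpair; auto. }
    destruct (classic (e = mkedge Huw)) as [->|E].
    + exists n'; split; [lia | auto].
    + exists (S n'); split; [lia|]. econstructor; [|eauto].
      split; [exact E | exists u; split; simpl; unfold vpair; auto].
Qed.

Lemma walk_of_line_walk {n} {e g : LV} : walk LA n e g -> (1 <= n)%nat ->
  exists a c m, proj1_sig e a /\ proj1_sig g c /\ walk adj m a c /\ (S m <= n)%nat.
Proof.
  induction 1 as [u | n e w g Hew Hw IH]; intros Hn; [lia|].
  destruct Hew as [Hne [z [Hze Hzw]]].
  destruct n.
  - inversion Hw; subst. exists z, z, 0%nat. repeat split; auto. constructor.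
  - destruct IH as [a' [c [m [Ha' [Hc [Hm Hle]]]]]]; [lia|].
    destruct (classic (a' = z)) as [->|E].
    + exists z, c, m. repeat split; auto.
    + exists z, c, (S m). repeat split; auto; [|lia].
      econstructor; [|eauto]. apply adj_of_ledge with w; auto.
Qed.

Lemma line_graph_metric : metric_graph LA k.
Proof.
  split.
  - intros e f [H [x [H1 H2]]]. split; eauto.
  - intros e [H _]; auto.
  - intros e g. destruct (ledge_dest e) as [a [b [_ Ea]]], (ledge_dest g) as [c [f [_ Ec]]].
    destruct (mg_connected HG a c) as [m Hm].
    destruct (line_walk_of_walk Hm e g) as [n [_ Hn]]; eauto.
    + rewrite Ea; unfold vpair; auto.
    + rewrite Ec; unfold vpair; auto.
  - exact (mg_len_pos HG).
Qed.

Let HL := line_graph_metric.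

Lemma line_vdist_le {e g : LV} {a c} : proj1_sig e a -> proj1_sig g c -> DL e g <= k + DG a c.
Proof.
  intros Ha Hc. destruct (gdist_spec HG a c) as [W _].
  destruct (line_walk_of_walk W _ _ Ha Hc) as [n [Hn Wn]].
  pose proof (vdist_walk HL _ _ _ Wn). pose proof (mg_len_pos HG).
  apply le_INR in Hn. rewrite S_INR in Hn.
  assert (k * INR n <= k * (INR (gdist adj a c) + 1)) by (apply Rmult_le_compat_l; lra).
  unfold vdist at 2. lra.
Qed.

Lemma line_vdist_ge {e g : LV} :
  e <> g -> exists a c, proj1_sig e a /\ proj1_sig g c /\ k + DG a c <= DL e g.
Proof.
  intro N. destruct (gdist_spec HL e g) as [W _].
  destruct (gdist LA e g) as [|n] eqn:G0.
  - apply (gdist_eq0 HL) in G0. congruence.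
  - destruct (walk_of_line_walk W) as [a [c [m [Ha [Hc [Wm Hle]]]]]]; [lia|].
    exists a, c. repeat split; auto.
    pose proof (vdist_walk HG _ _ _ Wm). pose proof (mg_len_pos HG).
    unfold vdist at 2. rewrite G0. apply le_INR in Hle. rewrite S_INR in Hle.
    assert (k * (INR m + 1) <= k * INR (S n)) by (apply Rmult_le_compat_l; lra).
    lra.
Qed.

Lemma common_data_spec {e f : LV} {x ye yf} : LA e f -> common_data e f = (x, ye, yf) ->
  proj1_sig e = vpair x ye /\ proj1_sig f = vpair x yf /\ adj x ye /\ adj x yf.
Proof.
  intros H E. unfold common_data in E.
  match type of E with epsilon ?i ?P = _ => assert (HP : P (epsilon i P)) end.
  { apply epsilon_spec.
    destruct H as [_ [z [Hze Hzf]]].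
    destruct (ledge_other Hze) as [o1 [E1 A1]], (ledge_other Hzf) as [o2 [E2 A2]].
    exists (z, o1, o2); auto. }
  rewrite E in HP. exact HP.
Qed.

Lemma common_data_sym {e f : LV} {x ye yf} : LA e f ->
  common_data e f = (x, ye, yf) -> common_data f e = (x, yf, ye).
Proof.
  intros H E. destruct (common_data f e) as [[x' yf'] ye'] eqn:E'.
  destruct (common_data_spec H E) as (E1 & F1 & A1 & B1).
  destruct (common_data_spec (mg_sym HL _ _ H) E') as (F2 & E2 & A2 & B2).
  rewrite F1 in F2. rewrite E1 in E2.
  destruct (vpair_eq E2) as [[? ?]|[? ?]], (vpair_eq F2) as [[? ?]|[? ?]]; subst; auto;
    try (exfalso; eapply (mg_irrefl HG); eassumption).
  exfalso. apply (proj1 H), ledge_eq. congruence.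
Qed.

Lemma hmap_MPoint {e f : LV} t {x ye yf} : common_data e f = (x, ye, yf) ->
  h (MPoint e f t) =
  if Rle_dec t (k/2) then MPoint x ye (k/2 - t) else MPoint x yf (k/2 - (k - t)).
Proof. intro E. unfold hmap; simpl. now rewrite E, llen_k. Qed.

Lemma hmap_ok {p} : okL p -> okG (h p).
Proof.
  destruct p as [e f t]; intros [H Ht]; simpl in *.
  destruct (common_data e f) as [[x ye] yf] eqn:E.
  destruct (common_data_spec H E) as (_ & _ & A1 & B1).
  rewrite (hmap_MPoint t E). destruct Rle_dec; split; simpl; auto; lra.
Qed.

Lemma mdist_same_support {a b c e} u v : vpair a b = vpair c e -> adj a b ->
  dG (MPoint a b u) (MPoint c e v) = Rabs (u - v) \/
  dG (MPoint a b u) (MPoint c e v) = Rabs (u - (k - v)).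
Proof.
  intros E H. destruct (vpair_eq E) as [[<- <-]|[<- <-]].
  - left; apply mdist_same.
  - right; apply mdist_swap, (adj_neq HG); auto.
Qed.

Lemma lies_at_mid {x z z' : V} : x = z \/ x = z' -> lies_at k (MPoint z z' (k/2)) x (k/2).
Proof. intros [->| ->]; [left | right]; simpl; split; auto; field. Qed.

Lemma hmap_mid_le {p e tau z z'} : okL p -> lies_at k p e tau ->
  proj1_sig e = vpair z z' -> adj z z' -> dG (h p) (MPoint z z' (k/2)) <= tau.
Proof.
  destruct p as [pa pb t]; intros [Hp Ht] HA Ee Hz; simpl in *.
  destruct (common_data pa pb) as [[x ya] yb] eqn:E.
  destruct (common_data_spec Hp E) as (E1 & E2 & A1 & A2).
  rewrite (hmap_MPoint t E).
  assert (Hx : forall y t', adj x y -> x = z \/ x = z' -> 0 <= t' <= k ->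
                 dG (MPoint x y t') (MPoint z z' (k/2)) <= t' + k/2).
  { intros y t' Ay Mx Ht'.
    pose proof (mdist_le_lies_at HG (p := MPoint x y t') (a := x) (tau := t')
      ltac:(split; auto) (is_mpoint_mid HG _ _ Hz) ltac:(left; auto)
      (lies_at_mid Mx)) as T.
    rewrite (vdist_xx HG) in T. lra. }
  unfold lies_at in HA; simpl in HA. destruct HA as [[-> ->]|[-> ->]]; simpl in *;
    [assert (P : vpair x ya = vpair z z') by congruence
    | assert (P : vpair x yb = vpair z z') by congruence];
    assert (Mx : x = z \/ x = z') by (destruct (vpair_eq P) as [[]|[]]; auto);
    destruct Rle_dec.
  - destruct (mdist_same_support (k/2 - tau) (k/2) P A1) as [-> | ->]; min_abs_lra.
  - pose proof (Hx yb (k / 2 - (k - tau)) A2 Mx ltac:(lra)). lra.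
  - pose proof (Hx ya (k / 2 - (k - tau)) A1 Mx ltac:(lra)). lra.
  - destruct (mdist_same_support (k / 2 - (k - (k - tau))) (k/2) P A2) as [-> | ->];
      min_abs_lra.
Qed.

Lemma hmap_lies_at {q e sg} : okL q -> lies_at k q e sg -> 0 <= sg <= k/2 ->
  exists z z', proj1_sig e = vpair z z' /\ adj z z' /\
               dG (h q) (MPoint z z' (k/2 - sg)) = 0.
Proof.
  destruct q as [qa qb s]; intros [Hq Hs] HA Hsg; simpl in *.
  destruct (common_data qa qb) as [[x ya] yb] eqn:E.
  destruct (common_data_spec Hq E) as (E1 & E2 & A1 & A2).
  rewrite (hmap_MPoint s E).
  unfold lies_at in HA; simpl in HA. destruct HA as [[-> ->]|[-> ->]].
  - exists x, ya. repeat split; auto. destruct Rle_dec; [apply mdist_xx | lra].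
  - exists x, yb. repeat split; auto. destruct Rle_dec.
    + pose proof (mdist_common_start HG (k/2 - (k - sg)) (k/2 - sg) A1 A2
                    ltac:(lra) ltac:(lra)).
      pose proof (mdist_ge0 HG (p := MPoint x ya (k/2 - (k - sg))) (q := MPoint x yb (k/2 - sg))
                    ltac:(split; simpl; auto; lra) ltac:(split; simpl; auto; lra)).
      lra.
    + rewrite mdist_same. min_abs_lra.
Qed.

Lemma mdist_mids_le {A C : LV} {z z' w w'} : proj1_sig A = vpair z z' -> adj z z' ->
  proj1_sig C = vpair w w' -> adj w w' ->
  dG (MPoint z z' (k/2)) (MPoint w w' (k/2)) <= DL A C.
Proof.
  intros EA Az EC Aw. destruct (classic (A = C)) as [<-|N].
  - rewrite (vdist_xx HL). rewrite EA in EC.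
    destruct (mdist_same_support (k/2) (k/2) EC Az) as [-> | ->]; min_abs_lra.
  - destruct (line_vdist_ge N) as (a & c & Ha & Hc & Hle).
    rewrite EA in Ha. rewrite EC in Hc.
    pose proof (mdist_le_lies_at HG (is_mpoint_mid HG _ _ Az)
                  (is_mpoint_mid HG _ _ Aw) (lies_at_mid Ha) (lies_at_mid Hc)).
    lra.
Qed.

Lemma line_vdist_le_mdist_mids {A C : LV} {z z' w w'} : proj1_sig A = vpair z z' -> adj z z' ->
  proj1_sig C = vpair w w' -> adj w w' ->
  DL A C <= dG (MPoint z z' (k/2)) (MPoint w w' (k/2)).
Proof.
  intros EA Az EC Aw.
  assert (same_edge : A = C -> DL A C <= dG (MPoint z z' (k/2)) (MPoint w w' (k/2))).
  { intros <-. rewrite (vdist_xx HL).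
    apply (mdist_ge0 HG); apply (is_mpoint_mid HG); auto. }
  destruct (classic (z = w /\ z' = w')) as [[<- <-]|N1].
  { apply same_edge, ledge_eq. congruence. }
  destruct (classic (z = w' /\ z' = w)) as [[<- <-]|N2].
  { apply same_edge, ledge_eq. rewrite EA, EC. apply vpair_comm. }
  rewrite mdist_other by auto.
  assert (Hz : proj1_sig A z) by (rewrite EA; left; auto).
  assert (Hz' : proj1_sig A z') by (rewrite EA; right; auto).
  assert (Hw : proj1_sig C w) by (rewrite EC; left; auto).
  assert (Hw' : proj1_sig C w') by (rewrite EC; right; auto).
  pose proof (line_vdist_le Hz Hw). pose proof (line_vdist_le Hz Hw').
  pose proof (line_vdist_le Hz' Hw). pose proof (line_vdist_le Hz' Hw').
  min_abs_lra.
Qed.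

Lemma mdist_hmap_le_lies_at {p q} {A C : LV} {tau sg} : okL p -> okL q ->
  lies_at k p A tau -> lies_at k q C sg -> dG (h p) (h q) <= tau + DL A C + sg.
Proof.
  intros Hp Hq HA HC.
  destruct (ledge_dest A) as [z [z' [Az EA]]], (ledge_dest C) as [w [w' [Aw EC]]].
  pose proof (hmap_mid_le Hp HA EA Az). pose proof (hmap_mid_le Hq HC EC Aw).
  pose proof (mdist_mids_le EA Az EC Aw).
  pose proof (hmap_ok Hp) as V1. pose proof (hmap_ok Hq) as V2.
  pose proof (is_mpoint_mid HG _ _ Az) as V3. pose proof (is_mpoint_mid HG _ _ Aw) as V4.
  pose proof (mdist_triangle HG V1 V3 V2). pose proof (mdist_triangle HG V3 V4 V2).
  rewrite (mdist_sym HG V4 V2) in *. lra.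
Qed.

Lemma hmap_same_edge {e f t s} : LA e f -> 0 <= t <= k -> 0 <= s <= k ->
  dG (h (MPoint e f t)) (h (MPoint e f s)) <= Rabs (t - s).
Proof.
  intros H Ht Hs.
  destruct (common_data e f) as [[x ye] yf] eqn:E.
  destruct (common_data_spec H E) as (_ & _ & A1 & A2).
  rewrite !(hmap_MPoint _ E).
  destruct (Rle_dec t (k/2)), (Rle_dec s (k/2)); try (rewrite mdist_same; min_abs_lra).
  - pose proof (mdist_common_start HG (k/2 - t) (k/2 - (k - s)) A1 A2
                  ltac:(lra) ltac:(lra)). min_abs_lra.
  - pose proof (mdist_common_start HG (k/2 - (k - t)) (k/2 - s) A2 A1
                  ltac:(lra) ltac:(lra)). min_abs_lra.
Qed.

Lemma hmap_swap_edge {e f s} : LA e f -> 0 <= s <= k ->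
  dG (h (MPoint e f (k - s))) (h (MPoint f e s)) = 0.
Proof.
  intros H Hs.
  destruct (common_data e f) as [[x ye] yf] eqn:E.
  destruct (common_data_spec H E) as (_ & _ & A1 & A2).
  rewrite (hmap_MPoint _ E), (hmap_MPoint _ (common_data_sym H E)).
  destruct (Rle_dec (k - s) (k/2)), (Rle_dec s (k/2)).
  - (* [s = k/2]: both images are the common vertex of [e] and [f] *)
    replace (k/2 - (k - s)) with 0 by lra. replace (k/2 - s) with 0 by lra.
    pose proof (mdist_common_start HG 0 0 A1 A2 ltac:(lra) ltac:(lra)).
    pose proof (mdist_ge0 HG
                  (is_mpoint_start HG _ _ A1) (is_mpoint_start HG _ _ A2)).
    lra.
  - rewrite mdist_same. min_abs_lra.
  - rewrite mdist_same. min_abs_lra.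
  - lra.
Qed.

Lemma hmap_lipschitz {p q} : okL p -> okL q -> dG (h p) (h q) <= dL p q.
Proof.
  intros Hp Hq. pose proof (hmap_ok Hp) as Vp. pose proof (hmap_ok Hq) as Vq.
  destruct p as [pa pb t], q as [qa qb s].
  pose proof Hp as [Hpab Ht]. pose proof Hq as [Hqab Hs]. simpl in *.
  destruct (classic (pa = qa /\ pb = qb)) as [[<- <-]|N1].
  { rewrite mdist_same. apply hmap_same_edge; auto. }
  destruct (classic (pa = qb /\ pb = qa)) as [[<- <-]|N2].
  { rewrite mdist_swap by (apply (adj_neq HL); auto).
    assert (V' : okG (h (MPoint pa pb (k - s)))) by (apply hmap_ok; split; simpl; auto; lra).
    pose proof (mdist_zero_congr HG Vp V' Vp Vq (mdist_xx _) (hmap_swap_edge Hpab Hs)).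
    pose proof (hmap_same_edge (s := k - s) Hpab Ht ltac:(lra)).
    lra. }
  rewrite mdist_other by auto.
  assert (P1 : lies_at k (MPoint pa pb t) pa t) by (left; simpl; auto).
  assert (P2 : lies_at k (MPoint pa pb t) pb (k - t)) by (right; simpl; split; auto; ring).
  assert (Q1 : lies_at k (MPoint qa qb s) qa s) by (left; simpl; auto).
  assert (Q2 : lies_at k (MPoint qa qb s) qb (k - s)) by (right; simpl; split; auto; ring).
  pose proof (mdist_hmap_le_lies_at Hp Hq P1 Q1). pose proof (mdist_hmap_le_lies_at Hp Hq P1 Q2).
  pose proof (mdist_hmap_le_lies_at Hp Hq P2 Q1). pose proof (mdist_hmap_le_lies_at Hp Hq P2 Q2).
  min_abs_lra.
Qed.

Lemma vertex_or_mid_cases {x : mpoint LV} : vertex_or_mid k x ->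
  is_vertex k x \/ exists e f, x = MPoint e f (k/2).
Proof.
  destruct x as [e f t]; unfold vertex_or_mid; rewrite llen_k; simpl.
  intros [->|[->| ->]].
  - left; exists e; left; simpl; auto.
  - right; eauto.
  - left; exists f; right; simpl; split; auto; ring.
Qed.

Lemma hmap_expands_near_vertex {x q} : okL x -> is_vertex k x -> okL q -> dL x q <= k/2 ->
  dL x q <= dG (h x) (h q).
Proof.
  intros Vx [e HA] Vq Hle. pose proof (mg_len_pos HG).
  pose proof (mdist_ge0 HL Vx Vq).
  assert (AQ : lies_at k q e (dL x q)) by (apply (near_vertex HL); auto; lra).
  destruct (hmap_lies_at Vq AQ) as (z & z' & Ez & Az & Z1); [lra|].
  destruct (hmap_lies_at Vx HA) as (w & w' & Ew & Aw & Z2); [lra|].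
  assert (P : vpair z z' = vpair w w') by congruence.
  assert (V1 : okG (MPoint z z' (k/2 - dL x q))) by (split; simpl; auto; lra).
  assert (V2 : okG (MPoint w w' (k/2 - 0))) by (split; simpl; auto; lra).
  pose proof (mdist_zero_congr HG (hmap_ok Vq) (hmap_ok Vx) V1 V2 Z1 Z2).
  rewrite (mdist_sym HG (hmap_ok Vq) (hmap_ok Vx)) in *.
  destruct (mdist_same_support (k/2 - dL x q) (k/2 - 0) P Az) as [E|E];
    rewrite E in *; min_abs_lra.
Qed.

Lemma hmap_mid_same_edge {e f} t : LA e f -> 0 <= t <= k ->
  Rabs (k/2 - t) <= dG (h (MPoint e f (k/2))) (h (MPoint e f t)).
Proof.
  intros H Ht.
  destruct (common_data e f) as [[x ye] yf] eqn:E.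
  destruct (common_data_spec H E) as (_ & _ & A1 & A2).
  rewrite !(hmap_MPoint _ E). destruct (Rle_dec (k/2) (k/2)) as [_|]; [|lra].
  rewrite Rminus_diag. destruct Rle_dec.
  - pose proof (mdist_vertex_ge HG (k/2 - t) A1 A1 ltac:(lra)). min_abs_lra.
  - pose proof (mdist_vertex_ge HG (k/2 - (k - t)) A1 A2 ltac:(lra)). min_abs_lra.
Qed.

Lemma hmap_expands_near_mid {e f q} : okL (MPoint e f (k/2)) -> okL q ->
  dL (MPoint e f (k/2)) q <= k/2 -> dL (MPoint e f (k/2)) q <= dG (h (MPoint e f (k/2))) (h q).
Proof.
  intros Vx Vq Hle. pose proof Vx as [Hef _]; simpl in Hef.
  pose proof (mg_len_pos HG).
  destruct (near_midpoint HL _ _ _ Vx Vq Hle) as [[Ea Eb]|[[Ea Eb]|[Heq AQ]]].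
  - destruct q as [qa qb s]; pose proof Vq as [_ Hs]; simpl in *; subst.
    rewrite mdist_same. apply hmap_mid_same_edge; auto.
  - destruct q as [qa qb s]; pose proof Vq as [_ Hs]; simpl in *; subst.
    rewrite mdist_swap by (apply (adj_neq HL); auto).
    assert (V' : okG (h (MPoint e f (k - s)))) by (apply hmap_ok; split; simpl; auto; lra).
    assert (Z : dG (h (MPoint f e s)) (h (MPoint e f (k - s))) = 0).
    { rewrite (mdist_sym HG (hmap_ok Vq) V'). exact (hmap_swap_edge Hef Hs). }
    pose proof (mdist_zero_congr HG (hmap_ok Vx) (hmap_ok Vq) (hmap_ok Vx) V' (mdist_xx _) Z).
    pose proof (hmap_mid_same_edge (k - s) Hef ltac:(lra)). lra.
  - rewrite Heq. destruct AQ as [AQ|AQ];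
    destruct (hmap_lies_at Vq AQ) as (z & z' & Ez & Az & Z1); try lra;
    rewrite Rminus_0_r in Z1;
    destruct (common_data e f) as [[x ye] yf] eqn:E;
    destruct (common_data_spec Hef E) as (_ & _ & A1 & _);
    rewrite (hmap_MPoint _ E); (destruct (Rle_dec (k/2) (k/2)) as [_|]; [|lra]);
    rewrite Rminus_diag;
    pose proof (mdist_vertex_midpoint_ge HG A1 Az);
    pose proof (vdist_ge0 HG x z); pose proof (vdist_ge0 HG x z');
    pose proof (mdist_zero_congr HG (is_mpoint_start HG _ _ A1) (hmap_ok Vq)
                  (is_mpoint_start HG _ _ A1) (is_mpoint_mid HG _ _ Az) (mdist_xx _) Z1);
    min_abs_lra.
Qed.

Lemma hmap_expands_near {x q} : okL x -> vertex_or_mid k x -> okL q -> dL x q <= k/2 ->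
  dL x q <= dG (h x) (h q).
Proof.
  intros Vx Mx Vq Hle.
  destruct (vertex_or_mid_cases Mx) as [Hx|[e [f ->]]].
  - exact (hmap_expands_near_vertex Vx Hx Vq Hle).
  - exact (hmap_expands_near_mid Vx Vq Hle).
Qed.

Definition hmap_at_end (x p : mpoint LV) : Prop :=
  exists e z z', lies_at k x e 0 /\ proj1_sig e = vpair z z' /\ adj z z' /\
                 dG (h p) (MPoint z z' 0) = 0.

Lemma half_away_cases {x p} : okL x -> vertex_or_mid k x -> okL p -> dL x p = k/2 ->
  hmap_at_end x p \/ is_vertex k p.
Proof.
  intros Vx Mx Vp Heq. pose proof (mg_len_pos HG).
  destruct (vertex_or_mid_cases Mx) as [[e HA]|[e [f ->]]].
  - assert (AQ : lies_at k p e (dL x p)) by (apply (near_vertex HL); auto; lra).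
    rewrite Heq in AQ.
    destruct (hmap_lies_at Vp AQ) as (z & z' & Ez & Az & Z1); [lra|].
    rewrite Rminus_diag in Z1. left. exists e, z, z'. auto.
  - right. pose proof Vx as [Hef _]; simpl in Hef.
    destruct (near_midpoint HL _ _ _ Vx Vp ltac:(lra))
      as [[Ea Eb]|[[Ea Eb]|[_ [AQ|AQ]]]]; [| | exists e; auto | exists f; auto];
    destruct p as [qa qb s]; pose proof Vp as [_ Hs]; simpl in *; subst.
    + rewrite mdist_same in Heq.
      assert (s = 0 \/ s = k) as [->| ->] by (unfold Rabs in *; destruct Rcase_abs; lra).
      * exists e; left; simpl; auto.
      * exists f; right; simpl; split; auto; ring.
    + rewrite mdist_swap in Heq by (apply (adj_neq HL); auto).
      assert (s = 0 \/ s = k) as [->| ->] by (unfold Rabs in *; destruct Rcase_abs; lra).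
      * exists f; left; simpl; auto.
      * exists e; right; simpl; split; auto; ring.
Qed.

Lemma hmap_vertices_expand {p q} : okL p -> okL q -> is_vertex k p -> is_vertex k q ->
  dL p q <= dG (h p) (h q).
Proof.
  intros Vp Vq [a AP] [b AQ]. pose proof (mg_len_pos HG).
  destruct (hmap_lies_at Vp AP) as (z & z' & Ez & Az & Zp); [lra|].
  destruct (hmap_lies_at Vq AQ) as (w & w' & Ew & Aw & Zq); [lra|].
  rewrite Rminus_0_r in Zp, Zq.
  pose proof (mdist_le_lies_at HL Vp Vq AP AQ). pose proof (line_vdist_le_mdist_mids Ez Az Ew Aw).
  pose proof (mdist_zero_congr HG (hmap_ok Vp) (hmap_ok Vq)
                (is_mpoint_mid HG _ _ Az) (is_mpoint_mid HG _ _ Aw) Zp Zq).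
  lra.
Qed.

Lemma mdist_le_hmap_ends {x p y q} : okL x -> okL p -> okL y -> okL q ->
  hmap_at_end x p -> hmap_at_end y q -> dL x y <= k + dG (h p) (h q).
Proof.
  intros Vx Vp Vy Vq (e & z & z' & AX & Ez & Az & Zp) (g & w & w' & AY & Ew & Aw & Zq).
  pose proof (mdist_le_lies_at HL Vx Vy AX AY).
  assert (Hz : proj1_sig e z) by (rewrite Ez; left; auto).
  assert (Hw : proj1_sig g w) by (rewrite Ew; left; auto).
  pose proof (line_vdist_le Hz Hw). pose proof (vdist_le_mdist_vertices HG Az Aw).
  pose proof (mdist_zero_congr HG (hmap_ok Vp) (hmap_ok Vq)
                (is_mpoint_start HG _ _ Az) (is_mpoint_start HG _ _ Aw) Zp Zq).
  lra.
Qed.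

Lemma mdist_le_hmap_end_vertex {x p q} : okL x -> okL p -> okL q ->
  hmap_at_end x p -> is_vertex k q -> dL x q <= k/2 + dG (h p) (h q).
Proof.
  intros Vx Vp Vq (e & z & z' & AX & Ez & Az & Zp) [a AQ]. pose proof (mg_len_pos HG).
  destruct (hmap_lies_at Vq AQ) as (w & w' & Ew & Aw & Zq); [lra|].
  rewrite Rminus_0_r in Zq.
  pose proof (mdist_le_lies_at HL Vx Vq AX AQ).
  assert (Hz : proj1_sig e z) by (rewrite Ez; left; auto).
  assert (Hw : proj1_sig a w) by (rewrite Ew; left; auto).
  assert (Hw' : proj1_sig a w') by (rewrite Ew; right; auto).
  pose proof (line_vdist_le Hz Hw). pose proof (line_vdist_le Hz Hw').
  pose proof (mdist_vertex_midpoint_ge HG Az Aw).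
  pose proof (mdist_zero_congr HG (hmap_ok Vp) (hmap_ok Vq)
                (is_mpoint_start HG _ _ Az) (is_mpoint_mid HG _ _ Aw) Zp Zq).
  min_abs_lra.
Qed.

Lemma hmap_expands_from {x p q} : okL x -> vertex_or_mid k x -> okL p -> okL q ->
  dL p x = 0 -> dL x q <= k/2 -> dL x q <= dG (h p) (h q).
Proof.
  intros Vx Mx Vp Vq H0 Hle.
  pose proof (hmap_expands_near Vx Mx Vq Hle).
  pose proof (hmap_lipschitz Vp Vx). pose proof (mdist_ge0 HG (hmap_ok Vp) (hmap_ok Vx)).
  pose proof (mdist_triangle HG (hmap_ok Vx) (hmap_ok Vp) (hmap_ok Vq)).
  rewrite (mdist_sym HG (hmap_ok Vx) (hmap_ok Vp)) in *. lra.
Qed.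

Section Geodesic.
Variables (gs : R -> mpoint LV) (L : R) (x y : mpoint LV).
Hypotheses (Vx : okL x) (Vy : okL y) (Mx : vertex_or_mid k x) (My : vertex_or_mid k y).
Hypotheses (G : geodesic okL dL gs L) (H0 : dL (gs 0) x = 0) (HL0 : dL (gs L) y = 0).

Lemma gs_ok s : 0 <= s <= L -> okL (gs s).
Proof. destruct G as [_ [Hv _]]. apply Hv. Qed.

Lemma hmap_start_expands m : 0 <= m <= L -> m <= k/2 -> m <= dG (h (gs 0)) (h (gs m)).
Proof.
  intros Hm Hmk. destruct G as [Lpos _].
  rewrite <- (geodesic_start_dist HL m G Vx H0 Hm) at 1.
  apply (hmap_expands_from Vx Mx (gs_ok 0 ltac:(lra)) (gs_ok m Hm) H0).
  rewrite (geodesic_start_dist HL m G Vx H0 Hm). lra.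
Qed.

Lemma hmap_end_expands m : 0 <= m <= L -> m <= k/2 -> m <= dG (h (gs (L - m))) (h (gs L)).
Proof.
  intros Hm Hmk. destruct G as [Lpos _].
  assert (Hym : dL y (gs (L - m)) = m).
  { rewrite (geodesic_end_dist HL (L - m) G Vy HL0) by lra. ring. }
  rewrite (mdist_sym HG (hmap_ok (gs_ok (L - m) ltac:(lra))) (hmap_ok (gs_ok L ltac:(lra)))).
  rewrite <- Hym at 1.
  apply (hmap_expands_from Vy My (gs_ok L ltac:(lra)) (gs_ok (L - m) ltac:(lra)) HL0). lra.
Qed.

(* By [half_away_cases] the images of [gs (k/2)] and [gs (L - k/2)] are endpoints
   of the edges [x], [y] or midpoints of edges of G; in each case comparing
   distances in G and L(G) loses at most [k]. *)
Lemma hmap_middle_expands : k <= L -> L - k <= dG (h (gs (k/2))) (h (gs (L - k/2))).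
Proof.
  intros HkL. pose proof (mg_len_pos HG). destruct G as [Lpos [_ Hd]].
  pose proof (gs_ok (k/2) ltac:(lra)) as Vp. pose proof (gs_ok (L - k/2) ltac:(lra)) as Vq.
  set (p := gs (k/2)) in *. set (q := gs (L - k/2)) in *.
  assert (Hxp : dL x p = k/2) by exact (geodesic_start_dist HL (k/2) G Vx H0 ltac:(lra)).
  assert (Hyq : dL y q = k/2).
  { unfold q. rewrite (geodesic_end_dist HL _ G Vy HL0) by lra. ring. }
  assert (Hpq : dL p q = L - k).
  { unfold p, q. rewrite Hd by lra. unfold Rabs; destruct Rcase_abs; lra. }
  assert (Hxy : dL x y = L).
  { rewrite (mdist_sym HL Vx Vy), <- (mdist_zero_l HL (gs_ok L ltac:(lra)) Vy Vx HL0).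
    rewrite (mdist_sym HL (gs_ok L ltac:(lra)) Vx).
    exact (geodesic_start_dist HL L G Vx H0 ltac:(lra)). }
  pose proof (mdist_triangle HL Vx Vq Vy). pose proof (mdist_triangle HL Vy Vp Vx).
  rewrite (mdist_sym HL Vq Vy), (mdist_sym HL Vp Vx), (mdist_sym HL Vy Vx) in *.
  destruct (half_away_cases Vx Mx Vp Hxp) as [XP|XP];
    destruct (half_away_cases Vy My Vq Hyq) as [XQ|XQ].
  - pose proof (mdist_le_hmap_ends Vx Vp Vy Vq XP XQ). lra.
  - pose proof (mdist_le_hmap_end_vertex Vx Vp Vq XP XQ). lra.
  - pose proof (mdist_le_hmap_end_vertex Vy Vq Vp XQ XP).
    rewrite (mdist_sym HG (hmap_ok Vq) (hmap_ok Vp)) in *. lra.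
  - pose proof (hmap_vertices_expand Vp Vq XP XQ). lra.
Qed.

Lemma hmap_segment_geodesic a b : 0 <= a <= b -> b <= L ->
  b - a <= dG (h (gs a)) (h (gs b)) -> geodesic okG dG (fun s => h (gs (a + s))) (b - a).
Proof.
  apply (geodesic_lipschitz_image HG okL dL h gs L a b (@hmap_ok) (@hmap_lipschitz) G).
Qed.

(* With [m = min L (k/2)], [h] is isometric on [[0, m]] and on [[L - m, L]], and on
   [[m, L - m]] as well when [k <= L]; otherwise the first two pieces cover [[0, L]]. *)
Lemma hmap_geodesic_pieces : exists m a b,
  0 <= m <= k/2 /\ m <= L /\ 0 <= a <= b /\ b <= L /\
  (forall s, 0 <= s <= L -> s <= m \/ a <= s <= b \/ L - m <= s) /\
  geodesic okG dG (fun s => h (gs (0 + s))) (m - 0) /\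
  geodesic okG dG (fun s => h (gs (a + s))) (b - a) /\
  geodesic okG dG (fun s => h (gs (L - m + s))) (L - (L - m)).
Proof.
  pose proof (mg_len_pos HG). destruct G as [Lpos _].
  set (m := Rmin L (k/2)).
  assert (Hm : 0 <= m <= L /\ m <= k/2 /\ (L < k -> L <= 2 * m) /\ (k <= L -> m = k/2))
    by (unfold m; min_abs_lra).
  assert (G1 : geodesic okG dG (fun s => h (gs (0 + s))) (m - 0)).
  { apply hmap_segment_geodesic; try lra. rewrite Rminus_0_r. apply hmap_start_expands; lra. }
  assert (G3 : geodesic okG dG (fun s => h (gs (L - m + s))) (L - (L - m))).
  { apply hmap_segment_geodesic; try lra. replace (L - (L - m)) with m by ring.
    apply hmap_end_expands; lra. }
  destruct (Rle_dec k L) as [HkL|HkL].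
  - exists m, m, (L - m).
    do 5 (split; [intros; lra|]). split; [exact G1|]. split; [|exact G3].
    apply hmap_segment_geodesic; try lra.
    replace m with (k/2) by lra. replace (L - k/2 - k/2) with (L - k) by field.
    apply hmap_middle_expands; lra.
  - exists m, 0, m.
    do 5 (split; [intros; lra|]). split; [exact G1|]. split; [exact G1|exact G3].
Qed.

End Geodesic.

Lemma hmap_image_three_geodesics {gs L x y} m a b :
  geodesic okL dL gs L -> okL x -> okL y -> dL (gs 0) x = 0 -> dL (gs L) y = 0 ->
  0 <= m <= k/2 -> m <= L -> 0 <= a <= b -> b <= L ->
  (forall s, 0 <= s <= L -> s <= m \/ a <= s <= b \/ L - m <= s) ->
  geodesic okG dG (fun s => h (gs (0 + s))) (m - 0) ->
  geodesic okG dG (fun s => h (gs (a + s))) (b - a) ->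
  geodesic okG dG (fun s => h (gs (L - m + s))) (L - (L - m)) ->
  exists (g1 g2 g3 : R -> mpoint V) (L1 L2 L3 : R),
    geodesic okG dG g1 L1 /\ geodesic okG dG g2 L2 /\ geodesic okG dG g3 L3 /\
    (forall s, 0 <= s <= L ->
       on_path dG g1 L1 (h (gs s)) \/ on_path dG g2 L2 (h (gs s)) \/
       on_path dG g3 L3 (h (gs s))) /\
    (forall s, 0 <= s <= L1 -> on_path dG (fun u => h (gs u)) L (g1 s)) /\
    (forall s, 0 <= s <= L2 -> on_path dG (fun u => h (gs u)) L (g2 s)) /\
    (forall s, 0 <= s <= L3 -> on_path dG (fun u => h (gs u)) L (g3 s)) /\
    on_path dG g1 L1 (h x) /\ on_path dG g3 L3 (h y) /\
    0 <= L1 <= k / 2 /\ 0 <= L3 <= k / 2.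
Proof.
  intros G Vx Vy H0 HL0 Hm HmL Hab HbL Cov G1 G2 G3.
  pose proof G as [_ [Hv _]].
  assert (on_piece : forall c e s, c <= s <= e ->
            on_path dG (fun u => h (gs (c + u))) (e - c) (h (gs s))).
  { intros c e s Hs. exists (s - c); split; [lra|].
    replace (c + (s - c)) with s by ring. apply mdist_xx. }
  assert (piece_on : forall c e s, 0 <= c -> e <= L -> 0 <= s <= e - c ->
            on_path dG (fun u => h (gs u)) L (h (gs (c + s)))).
  { intros c e s Hc He Hs. exists (c + s); split; [lra | apply mdist_xx]. }
  assert (end_near : forall s p, 0 <= s <= L -> okL p -> dL (gs s) p = 0 ->
            dG (h (gs s)) (h p) = 0).
  { intros s p Hs Vp Z. pose proof (hmap_lipschitz (Hv s Hs) Vp).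
    pose proof (mdist_ge0 HG (hmap_ok (Hv s Hs)) (hmap_ok Vp)). lra. }
  exists (fun s => h (gs (0 + s))), (fun s => h (gs (a + s))), (fun s => h (gs (L - m + s))),
    (m - 0), (b - a), (L - (L - m)).
  do 3 (split; [assumption|]).
  split.
  { intros s Hs. destruct (Cov s Hs) as [C|[C|C]];
      [left | right; left | right; right]; apply on_piece; lra. }
  split; [intros s Hs; apply (piece_on 0 m); lra|].
  split; [intros s Hs; apply (piece_on a b); lra|].
  split; [intros s Hs; apply (piece_on (L - m) L); lra|].
  split.
  { exists 0; split; [lra|]. rewrite Rplus_0_r. apply end_near; auto. lra. }
  split.
  { exists (L - (L - m)); split; [lra|]. replace (L - m + (L - (L - m))) with L by ring.
    apply end_near; auto. lra. }
  split; lra.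
Qed.

End LineGraph.

Theorem mainTheorem4 (V : Type) (adj : V -> V -> Prop) (k : R)
  (Hsimple : simple_graph adj) (Hconn : connected adj)
  (Hlf : locally_finite adj) (Hk : 0 < k)
  : forall (gs : R -> mpoint (ledge adj)) (L : R) (x y : mpoint (ledge adj)),
  is_mpoint (ladj (adj:=adj)) (llen k) x ->
  is_mpoint (ladj (adj:=adj)) (llen k) y ->
  vertex_or_mid k x -> vertex_or_mid k y ->
  geodesic (is_mpoint (ladj (adj:=adj)) (llen k))
           (mdist (ladj (adj:=adj)) (llen k)) gs L ->
  mdist (ladj (adj:=adj)) (llen k) (gs 0) x = 0 ->
  mdist (ladj (adj:=adj)) (llen k) (gs L) y = 0 ->
  exists (g1 g2 g3 : R -> mpoint V) (L1 L2 L3 : R),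
    geodesic (is_mpoint adj k) (mdist adj k) g1 L1 /\
    geodesic (is_mpoint adj k) (mdist adj k) g2 L2 /\
    geodesic (is_mpoint adj k) (mdist adj k) g3 L3 /\
    (forall s, 0 <= s <= L ->
       on_path (mdist adj k) g1 L1 (hmap k (gs s)) \/
       on_path (mdist adj k) g2 L2 (hmap k (gs s)) \/
       on_path (mdist adj k) g3 L3 (hmap k (gs s))) /\
    (forall s, 0 <= s <= L1 -> on_path (mdist adj k) (fun u => hmap k (gs u)) L (g1 s)) /\
    (forall s, 0 <= s <= L2 -> on_path (mdist adj k) (fun u => hmap k (gs u)) L (g2 s)) /\
    (forall s, 0 <= s <= L3 -> on_path (mdist adj k) (fun u => hmap k (gs u)) L (g3 s)) /\
    on_path (mdist adj k) g1 L1 (hmap k x) /\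
    on_path (mdist adj k) g3 L3 (hmap k y) /\
    0 <= L1 <= k / 2 /\ 0 <= L3 <= k / 2.
Proof.
  destruct Hsimple as [Hsym Hirr].
  assert (HG : metric_graph adj k) by (split; auto).
  intros gs L x y. rewrite llen_k. intros Vx Vy Mx My G H0 HL.
  destruct (hmap_geodesic_pieces HG gs L x y Vx Vy Mx My G H0 HL)
    as (m & a & b & Hm & HmL & Hab & HbL & Cov & G1 & G2 & G3).
  exact (hmap_image_three_geodesics HG m a b G Vx Vy H0 HL Hm HmL Hab HbL Cov G1 G2 G3).
Qed.
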